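(* Let $\mathcal{H}$ be a real or complex Hilbert space, $\mathcal{F}$ a Hilbert space (with Euclidean norm $\|\cdot\|_{\mathcal{F}}$), $\Sigma\subset\mathcal{H}$ a model set which is either a union of subspaces (UoS) or a cone, and $f:\mathcal{H}\to\mathbb{R}\cup\{+\infty\}$ a regularizer with $f(x)<\infty$ for all $x\in\Sigma$. Let $M:\mathcal{H}\to\mathcal{F}$ be a continuous linear operator satisfying the RIP on $\Sigma-\Sigma$ with constant $\delta<\delta_\Sigma(f)$. Then for every $x_0\in\Sigma$, $x_0$ is the unique minimizer of $$\min_{x\in\mathcal{H}} f(x)\quad\text{subject to}\quad Mx=Mx_0 .$$
   Context: The inner product $\langle\cdot,\cdot\rangle$ on $\mathcal{H}$ is Hermitian, $\|x\|_{\mathcal{H}}^2=\langle x,x\rangle$, and $\mathcal{R}e$ denotes real part. $\Sigma$ is a UoS if $t z\in\Sigma$ for all $t\in\mathbb{R}$, $z\in\Sigma$; a cone if $tz\in\Sigma$ for all $t\ge 0$, $z\in\Sigma$. $\Sigma-\Sigma=\{x-x':x,x'\in\Sigma\}$. $M$ has the RIP on $\Sigma-\Sigma$ with constant $\delta$ if $(1-\delta)\|x\|_{\mathcal{H}}^2\le\|Mx\|_{\mathcal{F}}^2\le(1+\delta)\|x\|_{\mathcal{H}}^2$ for all $x\in\Sigma-\Sigma$. Atomic norm: for a set $\mathcal{A}\subset\mathcal{H}$, $\|x\|_{\mathcal{A}}=\inf\{t\ge0: x\in t\cdot\overline{\mathrm{conv}}(\mathcal{A})\}$ (closure in $\mathcal{H}$),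 with $\|x\|_{\mathcal{A}}=+\infty$ if no such $t$ exists. Set $\|\cdot\|_\Sigma:=\|\cdot\|_{\Sigma\cap S(1)}$ where $S(1)=\{x:\|x\|_{\mathcal{H}}=1\}$. Descent set: $\mathcal{T}_f(\Sigma)=\bigcup_{x\in\Sigma}\{z\in\mathcal{H}: f(x+z)\le f(x)\}$. Admissible constant: $\delta_\Sigma(f):=\inf_{z\in\mathcal{T}_f(\Sigma)\setminus\{0\}}\ \sup_{x\in\Sigma\setminus\{0\}}\delta_\Sigma(x,z)$, where, if $\Sigma$ is a UoS, $$\delta_\Sigma(x,z)=\frac{-\mathcal{R}e\langle x,z\rangle}{\|x\|_{\mathcal{H}}\sqrt{\|x+z\|_\Sigma^2-\|x\|_{\mathcal{H}}^2-2\mathcal{R}e\langle x,z\rangle}},$$ and, if $\Sigma$ is a cone (not a UoS), $$\delta_\Sigma(x,z)=\frac{-2\mathcal{R}e\langle x,z\rangle}{\|x+z\|_\Sigma^2-2\mathcal{R}e\langle x,z\rangle}.$$ (If $\|x+z\|_\Sigma=+\infty$ the quotient is read as $0$.) *)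

From HB Require Import structures.
From mathcomp Require Import all_boot all_order all_algebra sesquilinear.
From mathcomp Require Import all_classical all_reals ereal.
From mathcomp Require Import complex.

Set Implicit Arguments.
Unset Strict Implicit.
Unset Printing Implicit Defensive.

Import Order.TTheory GRing.Theory Num.Theory.
Local Open Scope classical_set_scope.
Local Open Scope ring_scope.

(* Generic setting: scalar field K (K = R for real, K = R[i] for complex
   Hilbert spaces), theta : K -> K the conjugation of the Hermitian inner
   product (idfun resp. complex conjugation), re : K -> R the real part
   (id resp. complex.Re). *)

Definition ipnorm (R : realType) (K : numFieldType) (re : K -> R)
  (H : lmodType K) (dot : H -> H -> K) (x : H) : R :=
  Num.sqrt (re (dot x x)).

Definition reip (R : realType) (K : numFieldType) (re : K -> R)
  (H : lmodType K) (dot : H -> H -> K) (x z : H) : R :=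
  re (dot x z).

Definition ip_complete (R : realType) (K : numFieldType) (re : K -> R)
  (H : lmodType K) (dot : H -> H -> K) : Prop :=
  forall u : nat -> H,
    (forall e : R, 0 < e -> exists N : nat, forall m n : nat,
        (N <= m)%N -> (N <= n)%N -> ipnorm re dot (u m - u n) < e) ->
    exists l : H, forall e : R, 0 < e -> exists N : nat, forall n : nat,
        (N <= n)%N -> ipnorm re dot (u n - l) < e.

Definition ip_continuous (R : realType) (K : numFieldType) (re : K -> R)
  (H F : lmodType K) (dotH : H -> H -> K) (dotF : F -> F -> K) (M : H -> F) : Prop :=
  forall (x : H) (e : R), 0 < e -> exists2 d : R, 0 < d &
    forall y : H, ipnorm re dotH (y - x) < d -> ipnorm re dotF (M y - M x) < e.

Definition ip_closure (R : realType) (K : numFieldType) (re : K -> R)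
  (H : lmodType K) (dot : H -> H -> K) (A : set H) : set H :=
  [set x | forall e : R, 0 < e -> exists2 a, A a & ipnorm re dot (x - a) < e].

Definition conv_hull (K : numFieldType) (H : lmodType K) (A : set H) : set H :=
  [set x | exists (n : nat) (c : 'I_n -> K) (a : 'I_n -> H),
      [/\ forall i, 0 <= c i, \sum_(i < n) c i = 1, forall i, A (a i)
        & x = \sum_(i < n) c i *: a i]].

(* atomic norm ||x||_A = inf { t >= 0 : x in t . closure(conv A) },
   +oo when the set is empty (ereal_inf set0 = +oo) *)
Definition atomic_norm (R : realType) (K : numFieldType) (re : K -> R)
  (H : lmodType K) (dot : H -> H -> K) (A : set H) (x : H) : \bar R :=
  ereal_inf [set s : \bar R | exists t : K, [/\ s = (re t)%:E, 0 <= t &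
     exists2 y, ip_closure re dot (conv_hull A) y & x = t *: y]].

Definition sigma_norm (R : realType) (K : numFieldType) (re : K -> R)
  (H : lmodType K) (dot : H -> H -> K) (Sigma : set H) (x : H) : \bar R :=
  atomic_norm re dot [set y | Sigma y /\ ipnorm re dot y = 1] x.

Definition is_UoS (K : numFieldType) (H : lmodType K) (Sigma : set H) : Prop :=
  forall (t : K) (z : H), t \is Num.real -> Sigma z -> Sigma (t *: z).

Definition is_cone (K : numFieldType) (H : lmodType K) (Sigma : set H) : Prop :=
  forall (t : K) (z : H), 0 <= t -> Sigma z -> Sigma (t *: z).

Definition set_diff_minus (K : numFieldType) (H : lmodType K) (Sigma : set H) : set H :=
  [set y | exists x x', [/\ Sigma x, Sigma x' & y = x - x']].

Definition RIP (R : realType) (K : numFieldType) (re : K -> R)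
  (H F : lmodType K) (dotH : H -> H -> K) (dotF : F -> F -> K)
  (M : H -> F) (Sigma : set H) (delta : R) : Prop :=
  forall x, set_diff_minus Sigma x ->
    (1 - delta) * ipnorm re dotH x ^+ 2 <= ipnorm re dotF (M x) ^+ 2 /\
    ipnorm re dotF (M x) ^+ 2 <= (1 + delta) * ipnorm re dotH x ^+ 2.

Definition descent_set (R : realType) (K : numFieldType) (H : lmodType K)
  (f : H -> \bar R) (Sigma : set H) : set H :=
  [set z | exists2 x, Sigma x & (f (x + z)%R <= f x)%E].

(* delta_Sigma(x, z) (UoS formula if Sigma is a UoS, cone formula otherwise;
   read as 0 when ||x+z||_Sigma = +oo) *)
Definition delta_pt (R : realType) (K : numFieldType) (re : K -> R)
  (H : lmodType K) (dot : H -> H -> K) (Sigma : set H) (x z : H) : \bar R :=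
  let n := sigma_norm re dot Sigma (x + z) in
  let r := reip re dot x z in
  let nx := ipnorm re dot x in
  if n == +oo%E then 0%E
  else if `[< is_UoS Sigma >] then
    ((- r) / (nx * Num.sqrt (fine n ^+ 2 - nx ^+ 2 - 2 * r)))%:E
  else ((- (2 * r)) / (fine n ^+ 2 - 2 * r))%:E.

Definition admissible_const (R : realType) (K : numFieldType) (re : K -> R)
  (H : lmodType K) (dot : H -> H -> K) (f : H -> \bar R) (Sigma : set H) : \bar R :=
  ereal_inf [set s : \bar R | exists z : H,
     [/\ descent_set f Sigma z, z != 0 &
          s = ereal_sup [set d : \bar R | exists x : H,
                  [/\ Sigma x, x != 0 & d = delta_pt re dot Sigma x z]]]].

Definition recovery_statement (R : realType) (K : numFieldType)
  (theta : K -> K) (re : K -> R) : Prop :=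
  forall (H F : lmodType K) (dotH : {dot H for theta}) (dotF : {dot F for theta}),
    ip_complete re dotH -> ip_complete re dotF ->
  forall (Sigma : set H) (f : H -> \bar R),
    (is_UoS Sigma \/ is_cone Sigma) ->
    (forall x, f x != -oo%E) ->
    (forall x, Sigma x -> (f x < +oo)%E) ->
  forall (M : {linear H -> F}) (delta : R),
    ip_continuous re dotH dotF M ->
    RIP re dotH dotF M Sigma delta ->
    (delta%:E < admissible_const re dotH f Sigma)%E ->
  forall x0 : H, Sigma x0 ->
    (forall x : H, M x = M x0 -> (f x0 <= f x)%E) /\
    (forall x : H, M x = M x0 -> (f x <= f x0)%E -> x = x0).

From HB Require Import structures.
From mathcomp Require Import all_boot all_order all_algebra sesquilinear.
From mathcomp Require Import all_classical all_reals ereal.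
From mathcomp Require Import complex.
From mathcomp Require Import ring lra.
Set Implicit Arguments.
Unset Strict Implicit.
Unset Printing Implicit Defensive.

Import Order.TTheory GRing.Theory Num.Theory.
Local Open Scope classical_set_scope.
Local Open Scope ring_scope.

(* If [M x = M x0] and [f x <= f x0] with [x <> x0], then [z := x - x0] is a
   nonzero descent direction in the kernel of [M]; it suffices to show that
   [delta_Sigma(x, z) <= delta] for every [x] in [Sigma \ {0}] and every [z] in
   the kernel, since then [delta_Sigma(f) <= delta].  Write [x + z = t y] with
   [t >= 0] and [y] in the closed convex hull of the unit vectors of [Sigma].
   For every such unit vector [a], the RIP applied to [t a + (u - 1) x] and
   [t a - (u + 1) x] (to [t a] and [t a - 2 x] for a cone) gives an inequality
   that is affine in [a]; it therefore persists at [y], where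
   [t <y, x> = |x|^2 + <x, z>] and [t <M y, M x> = |M x|^2] because [M z = 0].
   This leaves a quadratic constraint on [t] (for a UoS after eliminating [u]
   by a discriminant).  The admissible [t] form a closed set, so the
   constraint holds at the infimum [t = |x + z|_Sigma], and solving it for
   [delta] bounds [delta_Sigma(x, z)]. *)

Lemma quadratic_ge0_discriminant (R : realFieldType) (a b c : R) : 0 <= a ->
  (forall s, 0 <= a * s ^+ 2 + b * s + c) -> b ^+ 2 <= 4 * a * c.
Proof.
move=> a_ge0 Hq; have [a0|a_neq0] := eqVneq a 0.
  have [->|b_neq0] := eqVneq b 0; first by rewrite a0 mulr0 mul0r expr0n.
  by have := Hq (- (c + 1) / b); rewrite a0 mul0r add0r mulrCA divff // mulr1; lra.
have a_gt0 : 0 < a by rewrite lt_def a_neq0.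
have := Hq (- b / (2 * a)).
have -> : a * (- b / (2 * a)) ^+ 2 + b * (- b / (2 * a)) + c
        = (4 * a * c - b ^+ 2) / (4 * a) by field; rewrite a_neq0.
by rewrite pmulr_lge0 ?invr_gt0 ?mulr_gt0 //; lra.
Qed.

(* The feasible set [{T >= 0 | al T^2 + be >= 0}] is a closed half-line. *)
Lemma ereal_inf_quadratic_ge0 (R : realType) (S : set (\bar R)) (al be : R) :
  0 <= al ->
  (forall s, S s -> exists T : R, [/\ s = T%:E, 0 <= T & 0 <= al * T ^+ 2 + be]) ->
  ereal_inf S != +oo%E ->
  exists n : R, [/\ ereal_inf S = n%:E, 0 <= n & 0 <= al * n ^+ 2 + be].
Proof.
move=> al_ge0 hS inf_fin.
have [s0 Ss0] : exists s, S s.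
  apply/not_existsP => S0; move: inf_fin; suff -> : S = set0 by rewrite ereal_inf0.
  by apply/seteqP; split => // s Ss; exact: (S0 s).
have [T0 [eT0 _ hT0]] := hS _ Ss0.
have inf_ge0 : (0%:E <= ereal_inf S)%E.
  by apply: le_ereal_inf_tmp => s /hS[T [-> T_ge0 _]]; rewrite lee_fin.
have inf_le : (ereal_inf S <= T0%:E)%E by rewrite -eT0; exact: ereal_inf_lbound.
case En: (ereal_inf S) inf_ge0 inf_le inf_fin => [n| |] //= n_ge0 _ _.
exists n; split => //.
have [al0|al_neq0] := eqVneq al 0.
  by move: hT0; rewrite al0 !mul0r !add0r.
have al_gt0 : 0 < al by rewrite lt_def al_neq0.
pose L := Num.sqrt (Num.max 0 (- be / al)).
have le_L T : 0 <= T -> 0 <= al * T ^+ 2 + be -> L <= T.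
  move=> T_ge0 hT; rewrite /L -(ger0_norm T_ge0) -sqrtr_sqr ler_wsqrtr //.
  by rewrite ge_max sqr_ge0 /= ler_pdivrMr //; lra.
have : (L%:E <= ereal_inf S)%E.
  by apply: le_ereal_inf_tmp => s /hS[T [-> T_ge0 hT]]; rewrite lee_fin le_L.
rewrite En lee_fin => L_le_n.
have : L ^+ 2 <= n ^+ 2 by rewrite ler_sqr ?nnegrE ?sqrtr_ge0 // -lee_fin.
rewrite sqr_sqrtr ?le_max ?lexx // ge_max => /andP[_].
by rewrite ler_pdivrMr //; lra.
Qed.

Lemma uos_ratio_le (R : rcfType) (d a n r : R) : 0 <= d -> 0 < a ->
  r ^+ 2 <= d ^+ 2 * a ^+ 2 * (n ^+ 2 - a ^+ 2 - 2 * r) ->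
  - r / (a * Num.sqrt (n ^+ 2 - a ^+ 2 - 2 * r)) <= d.
Proof.
set D := n ^+ 2 - a ^+ 2 - 2 * r => d_ge0 a_gt0 hr.
have [nr_le0|r_lt0] := lerP (- r) 0.
  apply: le_trans d_ge0; apply: mulr_le0_ge0 => //.
  by rewrite invr_ge0 mulr_ge0 ?sqrtr_ge0 ?ltW.
have D_gt0 : 0 < D.
  rewrite ltNge; apply/negP => D_le0.
  have : d ^+ 2 * a ^+ 2 * D <= 0 by apply: mulr_ge0_le0 => //; rewrite mulr_ge0 ?sqr_ge0.
  have : 0 < r ^+ 2 by rewrite -sqrrN exprn_gt0.
  lra.
have rhs_ge0 : 0 <= d * (a * Num.sqrt D).
  exact: mulr_ge0 d_ge0 (mulr_ge0 (ltW a_gt0) (sqrtr_ge0 D)).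
have sD_gt0 : 0 < Num.sqrt D by rewrite sqrtr_gt0.
rewrite ler_pdivrMr ?mulr_gt0 // -ler_sqr ?nnegrE ?(ltW r_lt0) //.
by rewrite sqrrN !exprMn (sqr_sqrtr (ltW D_gt0)) mulrA.
Qed.

Lemma cone_ratio_le (R : realFieldType) (d a2 n r : R) : 0 < a2 ->
  a2 + 2 * r <= n ^+ 2 -> 0 <= d * n ^+ 2 + 2 * (1 - d) * r ->
  - (2 * r) / (n ^+ 2 - 2 * r) <= d.
Proof. by move=> a2_gt0 hn hd; rewrite ler_pdivrMr; lra. Qed.

Lemma mul_le_half (R : realFieldType) (l p na nx e : R) :
  `|p| <= na * nx -> 0 <= na -> 0 <= nx -> 0 < e ->
  na < e / (2 * (`|l| * nx + 1)) -> l * p <= e / 2.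
Proof.
set c := `|l| * nx + 1 => hp na_ge0 nx_ge0 e_gt0.
have c_gt0 : 0 < c by rewrite /c ltr_wpDl ?mulr_ge0.
rewrite ltr_pdivlMr ?mulr_gt0 // => hna.
have h1 : l * p <= `|l| * (na * nx).
  by apply: le_trans (ler_norm _) _; rewrite normrM ler_wpM2l.
have h2 : `|l| * (na * nx) <= na * c by rewrite mulrCA ler_wpM2l // /c lerDl.
by rewrite ler_pdivlMr //; lra.
Qed.

Section RealPart.
Variables (R : realType) (K : numFieldType) (theta : K -> K) (re : K -> R).
Hypothesis reD : {morph re : a b / a + b}.
Hypothesis re_mul_real : forall c a, c \is Num.real -> re (c * a) = re c * re a.
Hypothesis re1 : re 1 = 1.
Hypothesis re_theta : forall a, re (theta a) = re a.
Hypothesis theta_real : forall c, c \is Num.real -> theta c = c.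
Hypothesis re_gt0 : forall a, 0 < a -> 0 < re a.
Hypothesis re_real_surj : forall b : R, exists2 k : K, k \is Num.real & re k = b.

Lemma re0 : re 0 = 0.
Proof. by apply: (addrI (re 0)); rewrite -reD !addr0. Qed.

Lemma reN a : re (- a) = - re a.
Proof. by apply/eqP; rewrite -subr_eq0 opprK -reD addNr re0. Qed.

Lemma re_ge0 a : 0 <= a -> 0 <= re a.
Proof. by rewrite le_eqVlt => /predU1P[<-|/re_gt0/ltW]; rewrite ?re0. Qed.

Lemma re_sum n (F : 'I_n -> K) : re (\sum_(i < n) F i) = \sum_(i < n) re (F i).
Proof. exact: (big_morph _ reD re0). Qed.

Local Notation ip := (reip re).

Section InnerProduct.
Variables (H : lmodType K) (dot : {dot H for theta}).

Lemma reipDl u v w : ip dot (u + v) w = ip dot u w + ip dot v w.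
Proof. by rewrite /reip linearDl reD. Qed.

Lemma reipDr u v w : ip dot u (v + w) = ip dot u v + ip dot u w.
Proof. by rewrite /reip linearDr reD. Qed.

Lemma reipNl u w : ip dot (- u) w = - ip dot u w.
Proof. by rewrite /reip linearNl reN. Qed.

Lemma reipNr u w : ip dot u (- w) = - ip dot u w.
Proof. by rewrite /reip linearNr reN. Qed.

Lemma reipBl u v w : ip dot (u - v) w = ip dot u w - ip dot v w.
Proof. by rewrite reipDl reipNl. Qed.

Lemma reipZl c u v : c \is Num.real -> ip dot (c *: u) v = re c * ip dot u v.
Proof. by move=> c_real; rewrite /reip linearZl_LR re_mul_real. Qed.

Lemma reipZr c u v : c \is Num.real -> ip dot u (c *: v) = re c * ip dot u v.
Proof. by move=> c_real; rewrite /reip linearZr_LR /= theta_real // re_mul_real. Qed.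

(* [hermC] does not apply: it requires [theta] to be a ring morphism. *)
Lemma reipC u v : ip dot u v = ip dot v u.
Proof.
rewrite /reip; have := @hermitian_subproof _ _ _ _ dot u v.
by rewrite expr0 mul1r => ->; rewrite re_theta.
Qed.

Lemma reip_ge0 u : 0 <= ip dot u u.
Proof.
have [->|u_neq0] := eqVneq u 0; first by rewrite /reip linear0l re0.
exact/re_ge0/ltW/neq0_dnorm_gt0.
Qed.

Lemma reip_gt0 u : u != 0 -> 0 < ip dot u u.
Proof. by move=> u_neq0; apply/re_gt0/neq0_dnorm_gt0. Qed.

Lemma ipnorm_ge0 u : 0 <= ipnorm re dot u.
Proof. exact: sqrtr_ge0. Qed.

Lemma ipnorm_sqr u : ipnorm re dot u ^+ 2 = ip dot u u.
Proof. by rewrite sqr_sqrtr // reip_ge0. Qed.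

Lemma ipnormN u : ipnorm re dot (- u) = ipnorm re dot u.
Proof. by rewrite /ipnorm -!/(reip _ _ _ _) reipNl reipNr opprK. Qed.

Lemma reip_lincomb s k u v : s \is Num.real -> k \is Num.real ->
  ip dot (s *: u + k *: v) (s *: u + k *: v) =
  re s ^+ 2 * ip dot u u + 2 * re s * re k * ip dot u v + re k ^+ 2 * ip dot v v.
Proof.
by move=> s_real k_real; rewrite !reipDl !reipDr !reipZl // !reipZr // (reipC v u); ring.
Qed.

Lemma reip_CauchySchwarz u v : ip dot u v ^+ 2 <= ip dot u u * ip dot v v.
Proof.
suff : (2 * ip dot u v) ^+ 2 <= 4 * ip dot v v * ip dot u u by lra.
apply: quadratic_ge0_discriminant (reip_ge0 v) _ => s.
have [k k_real <-] := re_real_surj s.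
by have := reip_ge0 (1 *: u + k *: v); rewrite reip_lincomb ?real1 // re1; lra.
Qed.

Lemma reip_abs_le u v : `|ip dot u v| <= ipnorm re dot u * ipnorm re dot v.
Proof.
rewrite -ler_sqr ?nnegrE ?mulr_ge0 ?ipnorm_ge0 //.
by rewrite real_normK ?num_real // exprMn !ipnorm_sqr reip_CauchySchwarz.
Qed.

Lemma reip_suml n (G : 'I_n -> H) w :
  ip dot (\sum_(i < n) G i) w = \sum_(i < n) ip dot (G i) w.
Proof. by rewrite /reip linear_sumlz /= re_sum. Qed.

End InnerProduct.

Section Measurement.
Variables (H F : lmodType K) (dotH : {dot H for theta}) (dotF : {dot F for theta}).
Variable M : {linear H -> F}.

Definition affine_form (k l1 l2 : R) (x : H) (v : F) (a : H) : R :=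
  k + l1 * ip dotH a x + l2 * ip dotF (M a) v.

Lemma affine_form_conv_hull_ge0 (A : set H) k l1 l2 x v a :
  (forall a', A a' -> 0 <= affine_form k l1 l2 x v a') ->
  conv_hull A a -> 0 <= affine_form k l1 l2 x v a.
Proof.
move=> hA [n [c [b [c_ge0 c_sum bA ->]]]].
have c_real i : c i \is Num.real by exact: ger0_real.
have re_c_sum : \sum_(i < n) re (c i) = 1 by rewrite -re_sum c_sum re1.
suff -> : affine_form k l1 l2 x v (\sum_(i < n) c i *: b i) =
          \sum_(i < n) re (c i) * affine_form k l1 l2 x v (b i).
  by apply: sumr_ge0 => i _; rewrite mulr_ge0 ?re_ge0 ?hA.
rewrite /affine_form linear_sum !reip_suml.
under eq_bigr do rewrite reipZl //.
under [X in l2 * X]eq_bigr do rewrite linearZ /= reipZl //.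
transitivity (\sum_(i < n) (re (c i) * k + l1 * (re (c i) * ip dotH (b i) x)
                              + l2 * (re (c i) * ip dotF (M (b i)) v))).
  by rewrite !big_split /= -mulr_suml re_c_sum mul1r -!mulr_sumr.
by apply: eq_bigr => i _; ring.
Qed.

Hypothesis M_continuous : ip_continuous re dotH dotF M.

Lemma affine_form_near k l1 l2 x v y e : 0 < e -> exists2 d, 0 < d &
  forall a, ipnorm re dotH (y - a) < d ->
    affine_form k l1 l2 x v a - e <= affine_form k l1 l2 x v y.
Proof.
move=> e_gt0; pose c1 := `|l1| * ipnorm re dotH x + 1.
pose c2 := `|l2| * ipnorm re dotF v + 1.
have c2_gt0 : 0 < c2 by rewrite ltr_wpDl ?mulr_ge0 ?ipnorm_ge0.
have [d d_gt0 hd] := M_continuous y (divr_gt0 e_gt0 (mulr_gt0 (ltr0n _ 2) c2_gt0)).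
exists (Num.min d (e / (2 * c1))).
  by rewrite lt_min d_gt0 divr_gt0 // mulr_gt0 // ltr_wpDl ?mulr_ge0 ?ipnorm_ge0.
move=> a; rewrite -opprB ipnormN lt_min => /andP[ha1 ha2].
have t1 : l1 * ip dotH (a - y) x <= e / 2.
  exact: mul_le_half (reip_abs_le dotH (a - y) x)
                     (ipnorm_ge0 _ _) (ipnorm_ge0 _ _) e_gt0 ha2.
have t2 : l2 * ip dotF (M a - M y) v <= e / 2.
  exact: mul_le_half (reip_abs_le dotF (M a - M y) v)
                     (ipnorm_ge0 _ _) (ipnorm_ge0 _ _) e_gt0 (hd a ha1).
by move: t1 t2; rewrite /affine_form !reipBl; lra.
Qed.

Lemma affine_form_closure_ge0 (A : set H) k l1 l2 x v y :
  (forall a, A a -> 0 <= affine_form k l1 l2 x v a) ->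
  ip_closure re dotH (conv_hull A) y -> 0 <= affine_form k l1 l2 x v y.
Proof.
move=> hA cy; rewrite leNgt; apply/negP => hy.
have e_gt0 : 0 < - affine_form k l1 l2 x v y / 2 by rewrite divr_gt0 // oppr_gt0.
have [d d_gt0 hd] := affine_form_near k l1 l2 x v y e_gt0.
have [a ca ha] := cy d d_gt0.
by have := hd a ha; have := affine_form_conv_hull_ge0 hA ca; lra.
Qed.

(* By Cauchy-Schwarz, [a |-> |y| - <a, y>] is nonnegative on unit vectors. *)
Lemma reip_closure_conv_le1 (A : set H) y : (forall a, A a -> ip dotH a a = 1) ->
  ip_closure re dotH (conv_hull A) y -> ip dotH y y <= 1.
Proof.
move=> hA cy; have n_ge0 := ipnorm_ge0 dotH y.
have : 0 <= affine_form (ipnorm re dotH y) (-1) 0 y 0 y.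
  apply: affine_form_closure_ge0 cy => a Aa.
  rewrite /affine_form mul0r addr0 mulN1r subr_ge0.
  apply: le_trans (ler_norm _) (le_trans (reip_abs_le _ a y) _).
  by rewrite /ipnorm -/(reip _ _ _ _) hA // sqrtr1 mul1r.
rewrite /affine_form mul0r addr0 mulN1r -ipnorm_sqr; nra.
Qed.

Variables (Sig : set H) (delta : R).
Hypothesis M_RIP : RIP re dotH dotF M Sig delta.

Lemma RIP_reip y : set_diff_minus Sig y ->
  (1 - delta) * ip dotH y y <= ip dotF (M y) (M y) /\
  ip dotF (M y) (M y) <= (1 + delta) * ip dotH y y.
Proof. by move/M_RIP; rewrite !ipnorm_sqr. Qed.

Lemma delta_ge0 x : is_UoS Sig \/ is_cone Sig -> Sig x -> x != 0 -> 0 <= delta.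
Proof.
move=> UoS_or_cone Sx x_neq0.
have S0 : Sig 0.
  by rewrite -(scale0r x); case: UoS_or_cone => [U|C]; [apply: U | apply: C].
have /RIP_reip[h1 h2] : set_diff_minus Sig x by exists x, 0; rewrite subr0.
have x_gt0 := reip_gt0 dotH x_neq0.
have : 0 <= delta * (2 * ip dotH x x) by lra.
by rewrite pmulr_lge0 // mulr_gt0.
Qed.

Local Notation unit_atoms := [set u | Sig u /\ ipnorm re dotH u = 1].

Lemma reip_unit_atom a : unit_atoms a -> ip dotH a a = 1.
Proof. by move=> [_ a1]; rewrite -ipnorm_sqr a1 expr1n. Qed.

Lemma uos_atom_ge0 x a t u : is_UoS Sig -> Sig x -> unit_atoms a -> 0 <= t ->
  0 <= affine_form ((1 + delta) * (re t ^+ 2 + (u - 1) ^+ 2 * ip dotH x x)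
                     - (1 - delta) * (re t ^+ 2 + (u + 1) ^+ 2 * ip dotH x x)
                     + 4 * u * ip dotF (M x) (M x))
                   (4 * (u - delta) * re t) (- 4 * u * re t) x (M x) a.
Proof.
move=> U Sx /[dup] Aa [Sa _] /ger0_real t_real.
have [b b_real <-] := re_real_surj u.
have b1_real : b - 1 \is Num.real by rewrite rpredB ?real1.
have b2_real : - (b + 1) \is Num.real by rewrite rpredN rpredD ?real1.
have /RIP_reip[_ up] : set_diff_minus Sig (t *: a + (b - 1) *: x).
  exists (t *: a), ((1 - b) *: x); split; [exact: U | | by rewrite -scaleNr opprB].
  by apply: U Sx; rewrite rpredB ?real1.
have /RIP_reip[low _] : set_diff_minus Sig (t *: a + (- (b + 1)) *: x).
  exists (t *: a), ((b + 1) *: x); split; [exact: U | | by rewrite scaleNr].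
  by apply: U Sx; rewrite rpredD ?real1.
move: up low; rewrite !linearD !linearZ /= !reip_lincomb // (reip_unit_atom Aa).
rewrite /affine_form !(reD, reN) re1; nra.
Qed.

Lemma cone_atom_ge0 x a t : is_cone Sig -> Sig x -> unit_atoms a -> 0 <= t ->
  0 <= affine_form ((1 + delta) * re t ^+ 2 - (1 - delta) * (re t ^+ 2 + 4 * ip dotH x x)
                     + 4 * ip dotF (M x) (M x))
                   (4 * (1 - delta) * re t) (- 4 * re t) x (M x) a.
Proof.
move=> C Sx /[dup] Aa [Sa _] /[dup] t_ge0 /ger0_real t_real.
have two_ge0 : 0 <= 1 + 1 :> K by rewrite addr_ge0 ?ler01.
have m2_real : - (1 + 1 : K) \is Num.real by rewrite rpredN ger0_real.
have /RIP_reip[_ up] : set_diff_minus Sig (t *: a + 0 *: x).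
  exists (t *: a), (0 *: x); split; [exact: C | exact: C | ].
  by rewrite !scale0r subr0 addr0.
have /RIP_reip[low _] : set_diff_minus Sig (t *: a + (- (1 + 1)) *: x).
  exists (t *: a), ((1 + 1) *: x); split; [exact: C | exact: C | by rewrite scaleNr].
move: up low; rewrite !linearD !linearZ /= !reip_lincomb ?real0 // (reip_unit_atom Aa).
rewrite /affine_form re0 !(reD, reN) re1; nra.
Qed.

Lemma kernel_decomposition x z t y : M z = 0 ->
  ip_closure re dotH (conv_hull unit_atoms) y -> x + z = t *: y -> 0 <= t ->
  [/\ re t * ip dotH y x = ip dotH x x + ip dotH x z,
      re t * ip dotF (M y) (M x) = ip dotF (M x) (M x) &
      ip dotH x x + 2 * ip dotH x z <= re t ^+ 2].
Proof.
move=> Mz cy xz_ty /ger0_real t_real; split.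
- by rewrite -reipZl // -xz_ty reipDl (reipC dotH z x).
- by rewrite -reipZl // -linearZ /= -xz_ty linearD Mz addr0.
- have y_le1 := reip_closure_conv_le1 reip_unit_atom cy.
  have : ip dotH (x + z) (x + z) = re t ^+ 2 * ip dotH y y.
    by rewrite xz_ty reipZl // reipZr // mulrA expr2.
  rewrite reipDl !reipDr (reipC dotH z x) => xz_sqr.
  have := reip_ge0 dotH z; have := sqr_ge0 (re t); nra.
Qed.

Lemma uos_kernel_bound x z t y : 0 <= delta -> is_UoS Sig -> Sig x -> M z = 0 ->
  ip_closure re dotH (conv_hull unit_atoms) y -> x + z = t *: y -> 0 <= t ->
  0 <= delta ^+ 2 * ip dotH x x * re t ^+ 2
       - (delta ^+ 2 * ip dotH x x * (ip dotH x x + 2 * ip dotH x z) + ip dotH x z ^+ 2).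
Proof.
move=> d_ge0 U Sx Mz cy xz_ty t_ge0.
have [yx My _] := kernel_decomposition Mz cy xz_ty t_ge0.
suff : (2 * ip dotH x z) ^+ 2 <=
       4 * (delta * ip dotH x x) * (delta * (re t ^+ 2 - ip dotH x x - 2 * ip dotH x z)).
  by move=> h; nra.
apply: quadratic_ge0_discriminant; first by rewrite mulr_ge0 ?reip_ge0.
move=> u; have := affine_form_closure_ge0 (fun a Aa => uos_atom_ge0 u U Sx Aa t_ge0) cy.
rewrite /affine_form -[_ * re t * ip dotH y x]mulrA -[_ * re t * ip dotF _ _]mulrA yx My.
nra.
Qed.

Lemma cone_kernel_bound x z t y : is_cone Sig -> Sig x -> M z = 0 ->
  ip_closure re dotH (conv_hull unit_atoms) y -> x + z = t *: y -> 0 <= t ->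
  0 <= delta * re t ^+ 2 + 2 * (1 - delta) * ip dotH x z.
Proof.
move=> C Sx Mz cy xz_ty t_ge0.
have [yx My _] := kernel_decomposition Mz cy xz_ty t_ge0.
have := affine_form_closure_ge0 (fun a Aa => cone_atom_ge0 C Sx Aa t_ge0) cy.
rewrite /affine_form -[_ * re t * ip dotH y x]mulrA -[_ * re t * ip dotF _ _]mulrA yx My.
nra.
Qed.

Lemma sigma_norm_finite w : sigma_norm re dotH Sig w != +oo%E ->
  exists n, sigma_norm re dotH Sig w = n%:E.
Proof.
move=> w_fin; have [|n [n_def _ _]] := @ereal_inf_quadratic_ge0 _ _ 0 0 (lexx 0) _ w_fin.
  by move=> _ [t [-> t_ge0 _]]; exists (re t); rewrite re_ge0 // mul0r addr0.
by exists n.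
Qed.

Lemma sigma_norm_quadratic_ge0 w n al be : 0 <= al ->
  (forall t y, ip_closure re dotH (conv_hull unit_atoms) y -> w = t *: y -> 0 <= t ->
     0 <= al * re t ^+ 2 + be) ->
  sigma_norm re dotH Sig w = n%:E -> 0 <= al * n ^+ 2 + be.
Proof.
move=> al_ge0 hw w_n; have w_fin : sigma_norm re dotH Sig w != +oo%E by rewrite w_n.
have [|n' [n'_def _ n'_ge]] := @ereal_inf_quadratic_ge0 _ _ al be al_ge0 _ w_fin.
  move=> _ [t [-> t_ge0 [y cy w_ty]]].
  by exists (re t); split; [| exact: re_ge0 t_ge0 | exact: hw w_ty t_ge0].
by have [->] : n%:E = n'%:E by rewrite -w_n -n'_def.
Qed.

Lemma delta_pt_kernel_le x z : is_UoS Sig \/ is_cone Sig -> Sig x -> x != 0 -> M z = 0 ->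
  (delta_pt re dotH Sig x z <= delta%:E)%E.
Proof.
move=> UoS_or_cone Sx x_neq0 Mz; have d_ge0 := delta_ge0 UoS_or_cone Sx x_neq0.
rewrite /delta_pt; case: eqP => [_|/eqP /sigma_norm_finite[n n_def]].
  by rewrite lee_fin.
have x_gt0 := reip_gt0 dotH x_neq0.
have norm_n : ip dotH x x + 2 * ip dotH x z <= n ^+ 2.
  suff : 0 <= 1 * n ^+ 2 - (ip dotH x x + 2 * ip dotH x z) by lra.
  apply: sigma_norm_quadratic_ge0 n_def => // t y cy xz_ty t_ge0.
  by have [_ _] := kernel_decomposition Mz cy xz_ty t_ge0; lra.
rewrite n_def /=; case: asboolP => [U|notU]; rewrite lee_fin.
  apply: uos_ratio_le; rewrite ?ipnorm_sqr ?sqrtr_gt0 //.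
  have := sigma_norm_quadratic_ge0 (mulr_ge0 (sqr_ge0 delta) (reip_ge0 dotH x))
    (fun t y cy xz_ty t_ge0 => uos_kernel_bound d_ge0 U Sx Mz cy xz_ty t_ge0) n_def.
  nra.
have C : is_cone Sig by case: UoS_or_cone => [/notU[]|].
apply: cone_ratio_le x_gt0 norm_n _.
exact: sigma_norm_quadratic_ge0 d_ge0
  (fun t y cy xz_ty t_ge0 => cone_kernel_bound C Sx Mz cy xz_ty t_ge0) n_def.
Qed.

End Measurement.

Lemma recovery : recovery_statement theta re.
Proof.
move=> H F dotH dotF _ _ Sig f UoS_or_cone _ _ M delta M_continuous M_RIP delta_lt x0 Sx0.
have unique : forall x, M x = M x0 -> (f x <= f x0)%E -> x = x0.
  move=> x Mx fx_le; have [//|x_neq] := eqVneq x x0.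
  have z_neq0 : x - x0 != 0 by rewrite subr_eq0.
  have descent : descent_set f Sig (x - x0) by exists x0 => //; rewrite addrCA subrr addr0.
  have Mz : M (x - x0) = 0 by rewrite linearB /= Mx subrr.
  suff : (admissible_const re dotH f Sig <= delta%:E)%E by rewrite leNgt delta_lt.
  apply: ge_ereal_inf; exists (ereal_sup [set d : \bar R | exists x' : H,
      [/\ Sig x', x' != 0 & d = delta_pt re dotH Sig x' (x - x0)]]).
    by exists (x - x0); split.
  apply: ge_ereal_sup => _ [x' [Sx' x'_neq0 ->]].
  exact: (delta_pt_kernel_le M_continuous M_RIP UoS_or_cone Sx' x'_neq0 Mz).
split=> // x Mx; rewrite leNgt; apply/negP => fx_lt.
by move: (fx_lt); rewrite (unique x Mx (ltW fx_lt)) ltxx.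
Qed.

End RealPart.

Local Open Scope complex_scope.

Section ComplexRe.
Variable R : realType.

Lemma complex_ReD : {morph @complex.Re R : a b / a + b}.
Proof. by move=> [a1 a2] [b1 b2]. Qed.

Lemma complex_Re_mul_real (c a : R[i]) :
  c \is Num.real -> complex.Re (c * a) = complex.Re c * complex.Re a.
Proof. by move=> /complex_realP[k ->]; case: a => a1 a2 /=; rewrite mul0r subr0. Qed.

Lemma complex_Re_conj (a : R[i]) : complex.Re (Num.conj a) = complex.Re a.
Proof. by case: a. Qed.

Lemma complex_conj_real (c : R[i]) : c \is Num.real -> Num.conj c = c.
Proof. by move=> /complex_realP[k ->]; exact: conjc_real. Qed.

Lemma complex_Re_gt0 (a : R[i]) : 0 < a -> 0 < complex.Re a.
Proof. by rewrite ltcE => /andP[]. Qed.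

Lemma complex_Re_real_surj (b : R) : exists2 k : R[i], k \is Num.real & complex.Re k = b.
Proof. by exists b%:C => //; apply/complex_realP; exists b. Qed.

End ComplexRe.

Theorem theorem1 :
  (forall R : realType, recovery_statement (K := R) idfun (fun t : R => t)) /\
  (forall R : realType, recovery_statement (K := R[i]) Num.conj (@complex.Re R)).
Proof.
split=> R.
  by apply: recovery => // b; exists b; rewrite ?num_real.
apply: recovery.
- exact: complex_ReD.
- exact: complex_Re_mul_real.
- by [].
- exact: complex_Re_conj.
- exact: complex_conj_real.
- exact: complex_Re_gt0.
- exact: complex_Re_real_surj.
Qed.
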